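(* Let $\mathcal S \subseteq U(4)$ be a set of two-qubit unitaries with the following property: for any $G_1,G_2,G_3 \in \mathcal S$ there exist $G_4,G_5,G_6\in\mathcal S$ with $$G_1^{(1)} G_2^{(2)} G_3^{(1)} = G_4^{(2)} G_5^{(1)} G_6^{(2)}$$ as operators on $(\mathbb C^2)^{\otimes 3}$, and conversely, for any $G_4,G_5,G_6\in\mathcal S$ there exist $G_1,G_2,G_3\in\mathcal S$ with the same equality. Then for any $A_1,\dots,A_6 \in \mathcal S$ there exist $B_1,\dots,B_6\in\mathcal S$ such that, as operators on $(\mathbb C^2)^{\otimes 4}$, $$A_6^{(2)}\,A_5^{(1)}A_4^{(3)}\,A_3^{(2)}\,A_2^{(1)}A_1^{(3)} \;=\; B_6^{(1)}B_5^{(3)}\,B_4^{(2)}\,B_3^{(1)}B_2^{(3)}\,B_1^{(2)}.$$ (In circuit language, read left to right in time: a four-qubit circuit whose four layers are {gates on qubits (1,2) and (3,4)}, {gate on (2,3)}, {gates on (1,2) and (3,4)}, {gate on (2,3)} equals a circuit with layers {gate on (2,3)}, {gates on (1,2) and (3,4)}, {gate on (2,3)}, {gates on (1,2) and (3,4)}, with gates from $\mathcal S$.)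
   Context: For a two-qubit unitary $G\in U(4)$ and a register of $n$ qubits, $G^{(i)}$ denotes $I_{2^{i-1}} \otimes G \otimes I_{2^{n-i-1}}$, i.e. $G$ acting on the adjacent qubits $i$ and $i+1$ and the identity elsewhere. Operator products act right to left (the rightmost factor is applied first). *)

From HB Require Import structures.
From mathcomp Require Import all_boot all_order all_algebra.
From mathcomp Require Import complex mxtens.
From mathcomp Require Import Rstruct.
Set Implicit Arguments. Unset Strict Implicit. Unset Printing Implicit Defensive.
Import Order.TTheory GRing.Theory Num.Theory.
Local Open Scope ring_scope.

Notation C := (complex Rdefinitions.R).
Definition C_nct : numClosedFieldType := C.

Definition adjmx (m n : nat) (A : 'M[C]_(m, n)) : 'M[C]_(n, m) :=
  (map_mx (fun z : C => z^*) A)^T.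

Definition unitary (d : nat) (A : 'M[C]_d) : Prop :=
  A *m adjmx A = 1%:M /\ adjmx A *m A = 1%:M.

(* G^{(i)} on n qubits: I_{2^(i-1)} (x) G (x) I_{2^(n-i-1)}, a 2^n x 2^n
   matrix (Kronecker product via mxtens.tensmx, standard row-major index
   convention, qubit 1 = most significant tensor factor).  conform_mx only
   serves to give it the type 'M_(2^n); for 1 <= i <= n-1 the dimensions
   agree and the result is exactly the Kronecker product. *)
Definition gate (n i : nat) (G : 'M[C]_4) : 'M[C]_(2 ^ n) :=
  conform_mx (0 : 'M[C]_(2 ^ n))
    ((1%:M : 'M[C]_(2 ^ (i - 1))) *t G *t (1%:M : 'M[C]_(2 ^ (n - i - 1)))).

From HB Require Import structures.
From mathcomp Require Import all_boot all_order all_algebra.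
From mathcomp Require Import complex mxtens Rstruct.
Set Implicit Arguments. Unset Strict Implicit. Unset Printing Implicit Defensive.
Import GRing.Theory.
Local Open Scope ring_scope.

(* The theorem is a statement about words in three families of gates
   g1, g2, g3 (gates on qubits (1,2), (2,3), (3,4) of a four-qubit register)
   satisfying two kinds of relations:
   - g1 and g3 act on disjoint qubits, hence commute;
   - each of the adjacent pairs (g1, g2) and (g2, g3) is "braid closed":
     every word a b a with gates from S can be rewritten as a word b a b with
     gates from S, and conversely.  It then checks that
   the concrete gates satisfy the hypotheses: the gates on four qubits are
   Kronecker products of the three-qubit gates with a one-qubit identity,
   X |-> X (x) I2 and X |-> I2 (x) X are multiplicative, so the three-qubit
   braid closure transports to qubits 1-3 and 2-4, and gates on (1,2) and
   (3,4) commute as (A (x) I) (I (x) B) = A (x) B = (I (x) B) (A (x) I). *)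

Section BraidClosure.
Variables (G : Type) (S : G -> Prop) (R : pzRingType) (n : nat).

Definition aba_to_bab (a b : G -> 'M[R]_n) : Prop :=
  forall G1 G2 G3, S G1 -> S G2 -> S G3 ->
    exists G4 G5 G6, [/\ S G4, S G5, S G6 &
      a G1 *m b G2 *m a G3 = b G4 *m a G5 *m b G6].

Definition bab_to_aba (a b : G -> 'M[R]_n) : Prop :=
  forall G4 G5 G6, S G4 -> S G5 -> S G6 ->
    exists G1 G2 G3, [/\ S G1, S G2, S G3 &
      a G1 *m b G2 *m a G3 = b G4 *m a G5 *m b G6].

End BraidClosure.

Section BraidClosureMap.
Variables (G : Type) (S : G -> Prop) (R : pzRingType) (m n : nat).
Variables (a b : G -> 'M[R]_m) (a' b' : G -> 'M[R]_n) (f : 'M[R]_m -> 'M[R]_n).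
Hypothesis fM : {morph f : x y / x *m y}.
Hypotheses (fa : forall x, f (a x) = a' x) (fb : forall x, f (b x) = b' x).

Lemma map_braid3 x y z u v w :
  a x *m b y *m a z = b u *m a v *m b w ->
  a' x *m b' y *m a' z = b' u *m a' v *m b' w.
Proof. by move=> /(congr1 f); rewrite !fM !fa !fb. Qed.

Lemma aba_to_bab_map : aba_to_bab S a b -> aba_to_bab S a' b'.
Proof.
move=> ab x y z Sx Sy Sz; have [u [v [w [Su Sv Sw /map_braid3 e]]]] := ab x y z Sx Sy Sz.
by exists u, v, w.
Qed.

Lemma bab_to_aba_map : bab_to_aba S a b -> bab_to_aba S a' b'.
Proof.
move=> ba u v w Su Sv Sw; have [x [y [z [Sx Sy Sz /map_braid3 e]]]] := ba u v w Su Sv Sw.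
by exists x, y, z.
Qed.

End BraidClosureMap.

Section LayerSwap.
Variables (G : Type) (S : G -> Prop) (R : pzRingType) (n : nat).
Variables (g1 g2 g3 : G -> 'M[R]_n).
Hypothesis g13_comm : forall x y, g1 x *m g3 y = g3 y *m g1 x.
Hypotheses (fwd12 : aba_to_bab S g1 g2) (fwd23 : aba_to_bab S g2 g3).
Hypotheses (bwd12 : bab_to_aba S g1 g2) (bwd23 : bab_to_aba S g2 g3).

(* The relations, applied inside a right-associated word X. *)
Let braid_in (a b c d e f : 'M[R]_n) : a *m b *m c = d *m e *m f ->
  forall p (X : 'M[R]_(n, p)), a *m (b *m (c *m X)) = d *m (e *m (f *m X)).
Proof. by move=> abc p X; rewrite !mulmxA abc. Qed.

Let g13_comm_in x y p (X : 'M[R]_(n, p)) : g1 x *m (g3 y *m X) = g3 y *m (g1 x *m X).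
Proof. by rewrite !mulmxA g13_comm. Qed.

Lemma layer_swap A1 A2 A3 A4 A5 A6 :
  S A1 -> S A2 -> S A3 -> S A4 -> S A5 -> S A6 ->
  exists B1 B2 B3 B4 B5 B6,
    [/\ S B1, S B2 & S B3] /\ [/\ S B4, S B5 & S B6] /\
    g2 A6 *m g1 A5 *m g3 A4 *m g2 A3 *m g1 A2 *m g3 A1 =
    g1 B6 *m g3 B5 *m g2 B4 *m g1 B3 *m g3 B2 *m g2 B1.
Proof.
move=> S1 S2 S3 S4 S5 S6.
have [C4 [C5 [C6 [SC4 SC5 SC6 /braid_in eC]]]] := fwd12 S5 S3 S2.
have [D4 [D5 [D6 [SD4 SD5 SD6 /braid_in eD]]]] := fwd23 S6 S4 SC4.
have [E1 [E2 [E3 [SE1 SE2 SE3 /braid_in eE]]]] := bwd23 SD6 SC6 S1.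
have [F1 [F2 [F3 [SF1 SF2 SF3 /braid_in eF]]]] := bwd12 SD5 SC5 SE1.
exists E3, E2, F3, F2, D4, F1; split=> //; split=> //.
(* Right-associate both words (closed by the identity) so that the relations
   apply inside them; the rewriting then runs through
   g2 A6 . g1 A5 . g3 A4 . g2 A3 . g1 A2 . g3 A1
   = g2 A6 . g3 A4 . [g1 A5 . g2 A3 . g1 A2] . g3 A1
   = [g2 A6 . g3 A4 . g2 C4] . g1 C5 . g2 C6 . g3 A1
   = g3 D4 . g2 D5 . g1 C5 . [g3 D6 . g2 C6 . g3 A1]
   = g3 D4 . [g2 D5 . g1 C5 . g2 E1] . g3 E2 . g2 E3
   = g3 D4 . g1 F1 . g2 F2 . g1 F3 . g3 E2 . g2 E3
   = g1 F1 . g3 D4 . g2 F2 . g1 F3 . g3 E2 . g2 E3. *)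
rewrite -[LHS]mulmx1 -[RHS]mulmx1 -!mulmxA.
rewrite (g13_comm_in A5 A4) eC eD -(g13_comm_in C5 D6) -eE -eF.
by rewrite -(g13_comm_in F1 D4).
Qed.

End LayerSwap.

Lemma mxtens_indexA k l r (x : 'I_k) (y : 'I_l) (z : 'I_r)
    (e : (k * (l * r) = k * l * r)%N) :
  cast_ord e (mxtens_index (x, mxtens_index (y, z)))
  = mxtens_index (mxtens_index (x, y), z).
Proof. by apply: val_inj => /=; rewrite mulnDl -mulnA addnA. Qed.

Section KroneckerAssoc.
Variable R : pzRingType.

Lemma tensmxA m n p q r s (A : 'M[R]_(m, n)) (B : 'M[R]_(p, q)) (D : 'M[R]_(r, s)) :
  A *t (B *t D) = castmx (esym (mulnA m p r), esym (mulnA n q s)) (A *t B *t D).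
Proof.
apply/matrixP => i j.
case: (mxtens_indexP i) => i1 i23; case: (mxtens_indexP i23) => i2 i3.
case: (mxtens_indexP j) => j1 j23; case: (mxtens_indexP j23) => j2 j3.
by rewrite castmxE !mxtens_indexA !tensmxE mulrA.
Qed.

Lemma tensmx11 m n : (1%:M : 'M[R]_m) *t (1%:M : 'M[R]_n) = 1%:M.
Proof.
apply/matrixP => i j.
case: (mxtens_indexP i) => i1 i2; case: (mxtens_indexP j) => j1 j2.
rewrite tensmxE !mxE (inj_eq (can_inj (@mxtens_indexK m n))) xpair_eqE.
by rewrite mulrnAr mulr1 -mulrnA mulnb.
Qed.

End KroneckerAssoc.

Lemma tensmx_mul1r (R : comPzRingType) m k (X Y : 'M[R]_m) :
  (X *m Y) *t (1%:M : 'M[R]_k) = (X *t 1%:M) *m (Y *t 1%:M).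
Proof. by rewrite tensmx_mul mulmx1. Qed.

Lemma tensmx_mul1l (R : comPzRingType) m k (X Y : 'M[R]_m) :
  (1%:M : 'M[R]_k) *t (X *m Y) = (1%:M *t X) *m (1%:M *t Y).
Proof. by rewrite tensmx_mul mulmx1. Qed.

Notation I2 := (1%:M : 'M[C]_2).
Notation I4 := (1%:M : 'M[C]_4).

Lemma gate3_1 (A : 'M[C]_4) : gate 3 1 A = A *t I2.
Proof. by rewrite /gate conform_mx_id tens_scalar1mx castmx_id. Qed.

Lemma gate3_2 (A : 'M[C]_4) : gate 3 2 A = I2 *t A.
Proof. by rewrite /gate conform_mx_id tens_mx_scalar scale1r castmx_id. Qed.

Lemma gate4_1 (A : 'M[C]_4) : gate 4 1 A = A *t I4.
Proof. by rewrite /gate conform_mx_id tens_scalar1mx castmx_id. Qed.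

Lemma gate4_2 (A : 'M[C]_4) : gate 4 2 A = I2 *t A *t I2.
Proof. by rewrite /gate conform_mx_id. Qed.

Lemma gate4_3 (A : 'M[C]_4) : gate 4 3 A = I4 *t A.
Proof. by rewrite /gate conform_mx_id tens_mx_scalar scale1r castmx_id. Qed.

Lemma gate4_1_lower (A : 'M[C]_4) : gate 4 1 A = gate 3 1 A *t I2.
Proof. by rewrite gate4_1 gate3_1; have := tensmxA A I2 I2; rewrite tensmx11 castmx_id. Qed.

Lemma gate4_2_lower (A : 'M[C]_4) : gate 4 2 A = gate 3 2 A *t I2.
Proof. by rewrite gate4_2 gate3_2. Qed.

Lemma gate4_2_upper (A : 'M[C]_4) : gate 4 2 A = I2 *t gate 3 1 A.
Proof. by rewrite gate4_2 gate3_1; have := tensmxA I2 A I2; rewrite castmx_id => ->. Qed.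

Lemma gate4_3_upper (A : 'M[C]_4) : gate 4 3 A = I2 *t gate 3 2 A.
Proof.
by rewrite gate4_3 gate3_2; have := tensmxA I2 I2 A; rewrite tensmx11 castmx_id => ->.
Qed.

Lemma gate4_13_comm (A B : 'M[C]_4) :
  gate 4 1 A *m gate 4 3 B = gate 4 3 B *m gate 4 1 A.
Proof.
rewrite gate4_1 gate4_3.
have := tensmx_mul A I4 I4 B; have := tensmx_mul I4 B A I4.
by rewrite !mulmx1 !mul1mx => eBA eAB; rewrite eAB eBA.
Qed.

Theorem mainTheorem2 (S : 'M[C]_4 -> Prop) :
  (forall G, S G -> unitary G) ->
  (forall G1 G2 G3, S G1 -> S G2 -> S G3 ->
     exists G4 G5 G6, [/\ S G4, S G5, S G6 &
       gate 3 1 G1 *m gate 3 2 G2 *m gate 3 1 G3 =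
       gate 3 2 G4 *m gate 3 1 G5 *m gate 3 2 G6]) ->
  (forall G4 G5 G6, S G4 -> S G5 -> S G6 ->
     exists G1 G2 G3, [/\ S G1, S G2, S G3 &
       gate 3 1 G1 *m gate 3 2 G2 *m gate 3 1 G3 =
       gate 3 2 G4 *m gate 3 1 G5 *m gate 3 2 G6]) ->
  forall A1 A2 A3 A4 A5 A6, S A1 -> S A2 -> S A3 -> S A4 -> S A5 -> S A6 ->
  exists B1 B2 B3 B4 B5 B6,
    [/\ S B1, S B2 & S B3] /\ [/\ S B4, S B5 & S B6] /\
    gate 4 2 A6 *m gate 4 1 A5 *m gate 4 3 A4 *m gate 4 2 A3
      *m gate 4 1 A2 *m gate 4 3 A1 =
    gate 4 1 B6 *m gate 4 3 B5 *m gate 4 2 B4 *m gate 4 1 B3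
      *m gate 4 3 B2 *m gate 4 2 B1.
Proof.
move=> _ fwd bwd; apply: layer_swap; first exact: gate4_13_comm.
- apply: (aba_to_bab_map (f := fun X : 'M[C]_(2 ^ 3) => X *t I2)) fwd.
  + exact: tensmx_mul1r.
  + by move=> A; rewrite gate4_1_lower.
  + by move=> A; rewrite gate4_2_lower.
- apply: (aba_to_bab_map (f := fun X : 'M[C]_(2 ^ 3) => I2 *t X)) fwd.
  + exact: tensmx_mul1l.
  + by move=> A; rewrite gate4_2_upper.
  + by move=> A; rewrite gate4_3_upper.
- apply: (bab_to_aba_map (f := fun X : 'M[C]_(2 ^ 3) => X *t I2)) bwd.
  + exact: tensmx_mul1r.
  + by move=> A; rewrite gate4_1_lower.
  + by move=> A; rewrite gate4_2_lower.
- apply: (bab_to_aba_map (f := fun X : 'M[C]_(2 ^ 3) => I2 *t X)) bwd.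
  + exact: tensmx_mul1l.
  + by move=> A; rewrite gate4_2_upper.
  + by move=> A; rewrite gate4_3_upper.
Qed.
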